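(* Let $\mathbb H$ be the real quaternion algebra, let $a,b,c\in\mathbb H$ be nonzero, and let $f(z)=z^2+azb+c$ be the two-sided polynomial evaluated as $f(z_0)=z_0^2+az_0b+c$. Then among the pure imaginary roots of $f$ there are at most two distinct norms; i.e. the number of pure imaginary roots of $f$ with pairwise distinct norms is at most two.
   Context: An element of $\mathbb H$ is pure imaginary if its real part is $0$; its norm is $N(q)=q\bar q$, which for pure imaginary $q$ equals $-q^2$. *)

From mathcomp Require Import all_boot all_order all_algebra.
From mathcomp Require Import reals.
Set Implicit Arguments. Unset Strict Implicit. Unset Printing Implicit Defensive.
Import Order.TTheory GRing.Theory Num.Theory.
Local Open Scope ring_scope.

(* The real quaternion algebra H: q = q0 + q1 i + q2 j + q3 k. *)
Record quat (R : realType) := Quat { q0 : R; q1 : R; q2 : R; q3 : R }.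

Definition qzero (R : realType) : quat R := Quat 0 0 0 0.

Definition qadd (R : realType) (x y : quat R) : quat R :=
  Quat (q0 x + q0 y) (q1 x + q1 y) (q2 x + q2 y) (q3 x + q3 y).

(* Hamilton product, i^2 = j^2 = k^2 = ijk = -1. *)
Definition qmul (R : realType) (x y : quat R) : quat R :=
  Quat (q0 x * q0 y - q1 x * q1 y - q2 x * q2 y - q3 x * q3 y)
       (q0 x * q1 y + q1 x * q0 y + q2 x * q3 y - q3 x * q2 y)
       (q0 x * q2 y - q1 x * q3 y + q2 x * q0 y + q3 x * q1 y)
       (q0 x * q3 y + q1 x * q2 y - q2 x * q1 y + q3 x * q0 y).

Definition qconj (R : realType) (x : quat R) : quat R :=
  Quat (q0 x) (- q1 x) (- q2 x) (- q3 x).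

Definition qre (R : realType) (x : quat R) : R := q0 x.
Definition pure_imag (R : realType) (x : quat R) : Prop := qre x = 0.

(* N(q) = q * conj q, a real number (we take the real part of that product). *)
Definition qnorm (R : realType) (x : quat R) : R := qre (qmul x (qconj x)).

Definition feval (R : realType) (a b c z : quat R) : quat R :=
  qadd (qadd (qmul z z) (qmul (qmul a z) b)) c.

From mathcomp Require Import all_boot all_order all_algebra.
From mathcomp Require Import reals.
From mathcomp Require Import ring lra.
Set Implicit Arguments. Unset Strict Implicit. Unset Printing Implicit Defensive.
Import GRing.Theory Num.Theory.
Local Open Scope ring_scope.

(* A pure imaginary root z satisfies z^2 = -N(z), so a z b = N(z) - c is a
   real shift of -c.  Taking norms, multiplicativity of N turns the root
   equation into the real quadratic t^2 - (2 Re c + N(a) N(b)) t + N(c) = 0 in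
   t = N(z).  A monic quadratic over a field has at most two roots, so at most
   two norms occur. *)

Section QuaternionNorm.

Variable R : realType.
Implicit Types a b c x y z : quat R.

Lemma qnormM x y : qnorm (qmul x y) = qnorm x * qnorm y.
Proof.
by case: x => ????; case: y => ????; rewrite /qnorm /qmul /qconj /qre /=; ring.
Qed.

Lemma qmul_pure_imag_self z :
  pure_imag z -> qmul z z = Quat (- qnorm z) 0 0 0.
Proof.
by case: z => z0 z1 z2 z3; rewrite /pure_imag /qre /qnorm /qmul /qconj /= => ->;
  congr Quat; ring.
Qed.

Lemma qnorm_real_sub (t : R) c :
  qnorm (Quat (t - q0 c) (- q1 c) (- q2 c) (- q3 c))
  = t ^+ 2 - 2 * q0 c * t + qnorm c.
Proof. by case: c => ????; rewrite /qnorm /qmul /qconj /qre /=; ring. Qed.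

Lemma feval_pure_imag_root a b c z :
  pure_imag z -> feval a b c z = qzero R ->
  qmul (qmul a z) b = Quat (qnorm z - q0 c) (- q1 c) (- q2 c) (- q3 c).
Proof.
move=> /qmul_pure_imag_self; rewrite /feval => ->.
case: (qmul (qmul a z) b) => w0 w1 w2 w3; case: c => c0 c1 c2 c3.
rewrite /qadd /qzero /= => -[e0 e1 e2 e3].
by congr Quat; [move: e0 | move: e1 | move: e2 | move: e3]; lra.
Qed.

Lemma qnorm_pure_imag_root a b c z :
  pure_imag z -> feval a b c z = qzero R ->
  qnorm z ^+ 2 - (2 * q0 c + qnorm a * qnorm b) * qnorm z + qnorm c = 0.
Proof.
move=> pz /(feval_pure_imag_root pz) /(congr1 (@qnorm R)).
rewrite !qnormM qnorm_real_sub => hN.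
by rewrite -(subrr (qnorm a * qnorm z * qnorm b)) {1}hN; ring.
Qed.

End QuaternionNorm.

Lemma quadratic_roots_sum (F : idomainType) (B C x y : F) :
  x ^+ 2 - B * x + C = 0 -> y ^+ 2 - B * y + C = 0 -> x != y -> x + y = B.
Proof.
move=> hx hy nxy; apply/eqP; rewrite -subr_eq0.
have : (x - y) * (x + y - B) = 0 by rewrite -(subrr 0) -{1}hx -hy; ring.
by move/eqP; rewrite mulf_eq0 => /orP [/eqP/subr0_eq/eqP|//]; rewrite (negbTE nxy).
Qed.

Lemma quadratic_no_three_roots (F : idomainType) (B C x y z : F) :
  x ^+ 2 - B * x + C = 0 -> y ^+ 2 - B * y + C = 0 -> z ^+ 2 - B * z + C = 0 ->
  x != y -> x != z -> y != z -> False.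
Proof.
move=> hx hy hz nxy nxz nyz.
have := quadratic_roots_sum hx hy nxy.
move/(canRL (addKr x)) /eqP; rewrite -(quadratic_roots_sum hx hz nxz) addKr.
by rewrite (negbTE nyz).
Qed.

Theorem mainTheorem20 (R : realType) (a b c : quat R) :
  a <> qzero R -> b <> qzero R -> c <> qzero R ->
  forall s : seq (quat R),
    (forall i, (i < size s)%N ->
       pure_imag (nth (qzero R) s i) /\ feval a b c (nth (qzero R) s i) = qzero R) ->
    uniq (map (@qnorm R) s) ->
    (size s <= 2)%N.
Proof.
move=> _ _ _ [|x [|y [|z s]]] //= roots.
have norm_quadratic i (lt_i : (i < (size s).+3)%N) :=
  let: conj pure root := roots i lt_i in qnorm_pure_imag_root pure root.
rewrite !inE !negb_or => /and4P [/andP [nxy /andP [nxz _]] /andP [nyz _] _ _].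
exfalso; exact: (quadratic_no_three_roots (norm_quadratic 0%N isT)
  (norm_quadratic 1%N isT) (norm_quadratic 2%N isT) nxy nxz nyz).
Qed.
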